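(* Let $T>0$ and let $d_M,d_I:\mathbb{R}\to(0,\infty)$, $D_I:\mathbb{R}\to[0,\infty)$, $\tau:\mathbb{R}\to(0,\infty)$, $p:\mathbb{R}\to[0,\infty)$ be $C^1$ and $T$-periodic, and let $h\in C^1([0,\infty);[0,\infty))$. Assume: (a) there are numbers $0<\alpha\le\beta<t_\alpha\le t_\beta<T$ with $t_\alpha-\tau(t_\alpha)=\alpha$, $t_\beta-\tau(t_\beta)=\beta$, and $p(t)=0$ for $t\in[0,\alpha]\cup[\beta,T]$; (b) $\tau'(t)<1$ for all $t\in\mathbb{R}$; (c) $h(0)=0$, $\lim_{z\to+\infty}h(z)=0$, and there is $z^*>0$ such that $h$ is increasing on $[0,z^* )$ and decreasing on $[z^*,+\infty)$; (d) $h(\lambda z)\ge\lambda h(z)$ for all $z\ge0$, $\lambda\in(0,1)$. Define $\overline{k}_M(t,s)=e^{-\int_s^t d_M(\omega)d\omega}$, $\varepsilon(s)=e^{-\int_{s-\tau(s)}^{s}d_I(\omega)d\omega}$, $g(s)=(1-\tau'(s))\varepsilon(s)p(s-\tau(s))$, and the map $\overline{Q}:[0,\infty)\to[0,\infty)$, $$\overline{Q}[z]=z\,\overline{k}_M(T,0)+\int_{t_\alpha}^{t_\beta}\overline{k}_M(T,s)\,g(s)\,h\big(z\,\overline{k}_M(s-\tau(s),0)\big)\,ds,$$ and the number $$L=\frac{\overline{k}_M(T,0)}{1-\overline{k}_M(T,0)}\int_{t_\alpha}^{t_\beta}\frac{g(s)h'(0)}{\overline{k}_M(s,s-\tau(s))}\,ds.$$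 Then: (i) If $L>1$, then $\overline{Q}$ admits at least one positive fixed point; denoting the minimal positive fixed point by $u^*$, one has $\lim_{n\to\infty}\overline{Q}^n[u]=u^*$ provided that $u\in(0,u^*]$ and $u^*\,\overline{k}_M(\alpha,0)\le z^*$. (ii) If $L<1$, then $\lim_{n\to\infty}\overline{Q}^n[u]=0$ for every $u\ge0$.
   Context: $\overline{Q}$ is the restriction to constant functions of the yearly (time-$T$) map of the mature-population equation of a stage-structured reaction–diffusion model with periodic maturation delay $\tau(t)$, birth rate $b(t,u)=p(t)h(u)$, breeding season $[\alpha,\beta]$ and maturation season $[t_\alpha,t_\beta]$. $\overline{Q}^n$ denotes the $n$-th iterate. *)

From Stdlib Require Import Reals.
From Coquelicot Require Export Coquelicot.
Open Scope R_scope.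

Definition isC1 (f : R -> R) : Prop :=
  forall x, ex_derive f x /\ continuous (Derive f) x.

Definition periodic (T : R) (f : R -> R) : Prop := forall t, f (t + T) = f t.

Definition kM (dM : R -> R) (t s : R) : R := exp (- RInt dM s t).

Definition eps (dI tau : R -> R) (s : R) : R := exp (- RInt dI (s - tau s) s).

Definition gfun (dI tau p : R -> R) (s : R) : R :=
  (1 - Derive tau s) * eps dI tau s * p (s - tau s).

Definition Qbar (T ta tb : R) (dM dI tau p h : R -> R) (z : R) : R :=
  z * kM dM T 0 +
  RInt (fun s => kM dM T s * gfun dI tau p s * h (z * kM dM (s - tau s) 0)) ta tb.

(* the threshold number L, with h0' = h'(0) *)
Definition Lnum (T ta tb : R) (dM dI tau p : R -> R) (h0' : R) : R :=
  kM dM T 0 / (1 - kM dM T 0) *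
  RInt (fun s => gfun dI tau p s * h0' / kM dM s (s - tau s)) ta tb.

(** Write the yearly map as [Q z = k z + \int_ta^tb w(s) h(z c(s)) ds] with
    [0 < k < 1], [w >= 0] and [c] pinched between two positive constants.
    Hypothesis (d) makes [h(z)/z] nonincreasing, so [h z <= h'(0) z] and
    [Q z <= (k + h'(0) \int w c) z]; when [L < 1] this coefficient is below 1
    and the iterates decay geometrically.  When [L > 1], [h(z)/z -> h'(0)] gives
    [Q z > z] near 0, while [h <= h z*] gives [Q z < z] for large [z]; the
    intermediate value theorem yields positive fixed points, they stay away from 0,
    and by continuity their infimum is the least one [u*].  Below [u*] the graph
    of [Q] lies above the diagonal, and [Q] is nondecreasing while [z c(s) <= z*],
    which [u* k_M(alpha,0) <= z*] guarantees on [(0,u*]]: the orbit increases to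
    a fixed point [<= u*], hence to [u*].  In the model [k = k_M(T,0)],
    [w = k_M(T,.) g], [c = k_M(. - tau(.), 0)], and [c <= k_M(alpha,0)] because
    [s - tau(s)] is nondecreasing ([tau' < 1]) and equals [alpha] at [ta];
    [L = h'(0) \int w c / (1 - k)] because the kernels compose,
    [k_M(T,s) k_M(s,s-tau(s)) k_M(s-tau(s),0) = k_M(T,0)]. *)

From Stdlib Require Import Reals Lra Classical.
From Coquelicot Require Import Coquelicot.
Open Scope R_scope.

Lemma locally_R (x : R) (P : R -> Prop) :
  locally x P -> exists d, 0 < d /\ forall y, Rabs (y - x) < d -> P y.
Proof. intros [d Hd]. exists d. split; [apply cond_pos | exact Hd]. Qed.

(* Specialisations to [R -> R] of generic Coquelicot lemmas, which do not unify
   with goals stated on [R] directly. *)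
Lemma continuous_mult_R (f g : R -> R) (x : R) :
  continuous f x -> continuous g x -> continuous (fun y => f y * g y) x.
Proof. apply (continuous_mult f g). Qed.

Lemma continuous_minus_R (f g : R -> R) (x : R) :
  continuous f x -> continuous g x -> continuous (fun y => f y - g y) x.
Proof. apply (continuous_minus f g). Qed.

Lemma continuous_comp_R (f g : R -> R) (x : R) :
  continuous f x -> continuous g (f x) -> continuous (fun y => g (f y)) x.
Proof. apply (continuous_comp f g). Qed.

Lemma ex_RInt_continuous_le (f : R -> R) (a b : R) :
  a <= b -> (forall s, a <= s <= b -> continuous f s) -> ex_RInt f a b.
Proof.
  intros Hab Hf. apply (ex_RInt_continuous (V := R_CompleteNormedModule)).
  now rewrite Rmin_left, Rmax_right.
Qed.

Lemma RInt_scal_R (f : R -> R) (a b l : R) :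
  ex_RInt f a b -> RInt (fun s => l * f s) a b = l * RInt f a b.
Proof. apply (RInt_scal f a b l). Qed.

Lemma ex_RInt_scal_R (f : R -> R) (a b l : R) :
  ex_RInt f a b -> ex_RInt (fun s => l * f s) a b.
Proof. apply (ex_RInt_scal f a b l). Qed.

Lemma continuity_pt_eps (f : R -> R) (x eps : R) :
  continuity_pt f x -> 0 < eps ->
  exists d, 0 < d /\ forall y, Rabs (y - x) < d -> Rabs (f y - f x) < eps.
Proof.
  intros Hf Heps.
  exact (locally_R _ _ (proj1 (continuity_pt_locally f x) Hf (mkposreal eps Heps))).
Qed.

Lemma continuity_pt_of_eps (f : R -> R) (x : R) :
  (forall eps, 0 < eps ->
     exists d, 0 < d /\ forall y, Rabs (y - x) < d -> Rabs (f y - f x) <= eps) ->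
  continuity_pt f x.
Proof.
  intros Hf. apply continuity_pt_locally. intros eps.
  destruct (Hf (eps / 2)) as [d [Hd Hfd]]; [pose proof (cond_pos eps); lra|].
  exists (mkposreal d Hd). intros y Hy.
  pose proof (Hfd y Hy). pose proof (cond_pos eps). lra.
Qed.

Lemma continuity_pt_RInt_param (F : R -> R -> R) (a b v : R) :
  a <= b ->
  locally v (fun z => ex_RInt (F z) a b) ->
  (forall eps, 0 < eps -> exists d, 0 < d /\
     forall z s, Rabs (z - v) < d -> a <= s <= b -> Rabs (F z s - F v s) <= eps) ->
  continuity_pt (fun z => RInt (F z) a b) v.
Proof.
  intros Hab Hex HF. apply continuity_pt_of_eps. intros eps Heps.
  destruct (locally_R _ _ Hex) as [r [Hr Hexr]].
  destruct (HF (eps / (b - a + 1))) as [d [Hd Hclose]].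
  { apply Rdiv_lt_0_compat; lra. }
  exists (Rmin r d). split; [now apply Rmin_pos|]. intros z Hz.
  assert (Hzr : Rabs (z - v) < r) by (eapply Rlt_le_trans; [exact Hz | apply Rmin_l]).
  assert (Hzd : Rabs (z - v) < d) by (eapply Rlt_le_trans; [exact Hz | apply Rmin_r]).
  assert (Hv : ex_RInt (F v) a b) by (apply Hexr; rewrite Rminus_eq_0, Rabs_R0; lra).
  assert (Ez : ex_RInt (F z) a b) by auto.
  replace (RInt (F z) a b - RInt (F v) a b) with (RInt (fun s => F z s - F v s) a b)
    by exact (RInt_minus (V := R_CompleteNormedModule) (F z) (F v) a b Ez Hv).
  eapply Rle_trans.
  - apply abs_RInt_le_const with (M := eps / (b - a + 1)); [exact Hab | |].
    + now apply (ex_RInt_minus (V := R_NormedModule)).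
    + intros s Hs. now apply Hclose.
  - apply (Rmult_le_reg_r (b - a + 1)); [lra|].
    replace (eps / (b - a + 1) * (b - a + 1)) with eps by (field; lra).
    replace ((b - a) * (eps / (b - a + 1)) * (b - a + 1)) with ((b - a) * eps) by (field; lra).
    nra.
Qed.

(** * Fixed points and iterates of maps of the half-line *)

Lemma fixed_point_between (f : R -> R) (a b : R) :
  a < b -> (forall x, a <= x <= b -> continuity_pt f x) ->
  a < f a -> f b < b -> exists z, a <= z <= b /\ f z = z.
Proof.
  intros Hab Hf Ha Hb.
  destruct (Ranalysis5.IVT_interv (fun z => z - f z) a b) as [z [Hz Hfz]].
  { intros x Hx. apply continuity_pt_minus; [apply continuity_pt_id | auto]. }
  1-3: lra.
  exists z. split; [exact Hz | lra].
Qed.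

Lemma least_positive_fixed_point (f : R -> R) (d : R) :
  0 < d ->
  (forall v, 0 < v -> continuity_pt f v) ->
  (forall v, 0 < v -> f v = v -> d <= v) ->
  (exists v, 0 < v /\ f v = v) ->
  exists u, 0 < u /\ f u = u /\ forall v, 0 < v -> f v = v -> u <= v.
Proof.
  intros Hd Hf Hbig [v0 [Hv0 Hfv0]].
  (* [completeness] only provides suprema, so we take the supremum of the negated fixed points. *)
  set (E := fun x => 0 < - x /\ f (- x) = - x).
  destruct (completeness E) as [m [Hub Hleast]].
  { exists (- d). intros x [Hx Hfx]. specialize (Hbig _ Hx Hfx). lra. }
  { exists (- v0). unfold E. rewrite Ropp_involutive. auto. }
  assert (Hmd : m <= - d).
  { apply Hleast. intros x [Hx Hfx]. specialize (Hbig _ Hx Hfx). lra. }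
  assert (Hmin : forall v, 0 < v -> f v = v -> - m <= v).
  { intros v Hv Hfv. enough (- v <= m) by lra.
    apply Hub. unfold E. rewrite Ropp_involutive. auto. }
  exists (- m). split; [lra|]. split; [|exact Hmin].
  apply NNPP. intros Hne.
  destruct (continuity_pt_eps (fun z => z - f z) (- m) (Rabs (- m - f (- m))))
    as [r [Hr Hnear]].
  { apply continuity_pt_minus; [apply continuity_pt_id | apply Hf; lra]. }
  { apply Rabs_pos_lt. lra. }
  destruct (classic (exists x, E x /\ m - r / 2 < x)) as [[x [[Hx Hfx] Hxm]] | Hno].
  - specialize (Hub x (conj Hx Hfx)).
    specialize (Hnear (- x)). rewrite Hfx, Rminus_eq_0, Rminus_0_l, Rabs_Ropp in Hnear.
    apply (Rlt_irrefl (Rabs (- m - f (- m)))), Hnear.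
    rewrite Rabs_right; lra.
  - enough (m <= m - r / 2) by lra.
    apply Hleast. intros x Hx. apply Rnot_lt_le. intros Hlt. apply Hno. eauto.
Qed.

Lemma lt_self_below_least_fixed_point (f : R -> R) (d us : R) :
  0 < d ->
  (forall v, 0 < v <= d -> v < f v) ->
  (forall v, 0 < v -> continuity_pt f v) ->
  (forall v, 0 < v -> f v = v -> us <= v) ->
  forall v, 0 < v < us -> v < f v.
Proof.
  intros Hd Hsmall Hf Hmin v Hv.
  destruct (Rle_lt_dec v d) as [Hvd | Hdv]; [apply Hsmall; lra|].
  apply Rnot_le_lt. intros [Hlt | Heq].
  - destruct (fixed_point_between f d v Hdv) as [z [Hz Hfz]].
    + intros x Hx. apply Hf. lra.
    + apply Hsmall. lra.
    + exact Hlt.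
    + specialize (Hmin z ltac:(lra) Hfz). lra.
  - specialize (Hmin v ltac:(lra) Heq). lra.
Qed.

Lemma iter_cvg_least_fixed_point (f : R -> R) (us u : R) :
  0 < u <= us ->
  f us = us ->
  (forall v, 0 < v <= us -> v <= f v) ->
  (forall x y, 0 < x -> x <= y -> y <= us -> f x <= f y) ->
  (forall v, 0 < v <= us -> continuity_pt f v) ->
  (forall v, 0 < v -> f v = v -> us <= v) ->
  is_lim_seq (fun n => Nat.iter n f u) us.
Proof.
  intros Hu Hfix Hup Hmono Hf Hmin.
  set (x := fun n => Nat.iter n f u).
  assert (Hx : forall n, u <= x n <= us /\ x n <= x (S n)).
  { induction n as [|n [Hn Hn']]; [unfold x; simpl; split; [lra | apply Hup; lra]|].
    assert (Hxs : x (S n) <= us) by (change (f (x n) <= us); rewrite <- Hfix; apply Hmono; lra).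
    split; [lra|]. apply Hup. lra. }
  destruct (growing_cv x) as [l Hl].
  { intros n. apply Hx. }
  { exists us. intros y [n ->]. apply Hx. }
  apply is_lim_seq_Reals in Hl.
  assert (Hlu : u <= l <= us).
  { split.
    - apply (is_lim_seq_le (fun _ => u) x u l); [apply Hx | apply is_lim_seq_const | exact Hl].
    - apply (is_lim_seq_le x (fun _ => us) l us); [apply Hx | exact Hl | apply is_lim_seq_const]. }
  assert (Hfl : f l = l).
  { apply is_lim_seq_unique in Hl as Hlim.
    pose proof (is_lim_seq_continuous f x l (Hf l ltac:(lra)) Hl) as Hfx.
    apply is_lim_seq_incr_1, is_lim_seq_unique in Hl.
    apply is_lim_seq_unique in Hfx.
    change (Lim_seq (fun n => f (x n)) = f l) in Hfx.
    change (Lim_seq (fun n => f (x n)) = l) in Hl.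
    rewrite Hl in Hfx. now injection Hfx. }
  replace us with l by (specialize (Hmin l ltac:(lra) Hfl); lra).
  exact Hl.
Qed.

Lemma iter_cvg_0 (f : R -> R) (q : R) :
  0 <= q < 1 -> (forall z, 0 <= z -> 0 <= f z <= q * z) ->
  forall u, 0 <= u -> is_lim_seq (fun n => Nat.iter n f u) 0.
Proof.
  intros Hq Hf u Hu.
  assert (Hn : forall n, 0 <= Nat.iter n f u <= q ^ n * u).
  { induction n as [|n IH]; simpl; [lra|].
    destruct (Hf (Nat.iter n f u) ltac:(lra)). nra. }
  apply is_lim_seq_le_le with (u := fun _ => 0) (w := fun n => q ^ n * u);
    [exact Hn | apply is_lim_seq_const |].
  replace (Finite 0) with (Rbar_mult 0 u) by (simpl; f_equal; ring).
  apply is_lim_seq_scal_r, is_lim_seq_geom. rewrite Rabs_right; lra.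
Qed.

(** * The birth function *)

Section ProductionFunction.

Variables (h hd : R -> R).

Hypothesis h_subhom : forall z lam, 0 <= z -> 0 < lam < 1 -> lam * h z <= h (lam * z).
Hypothesis h_at_0 : h 0 = 0.
Hypothesis h_rderive_0 : filterlim (fun y => (h y - h 0) / y) (at_right 0) (locally (hd 0)).
Hypothesis h_derive : forall z, 0 < z -> is_derive h z (hd z).

Lemma h_ratio_antitone (x y : R) : 0 < x <= y -> x * h y <= y * h x.
Proof.
  intros Hxy. destruct (Req_dec x y) as [<- | Hne]; [lra|].
  assert (Hlam : 0 < x / y < 1).
  { split; [apply Rdiv_lt_0_compat; lra|].
    apply (Rmult_lt_reg_r y); [lra|]. field_simplify; lra. }
  pose proof (h_subhom y (x / y) ltac:(lra) Hlam) as Hsub.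
  replace (x / y * y) with x in Hsub by (field; lra).
  apply (Rmult_le_compat_l y) in Hsub; [|lra].
  replace (y * (x / y * h y)) with (x * h y) in Hsub by (field; lra).
  exact Hsub.
Qed.

Lemma h_ratio_near_0 (eps : R) : 0 < eps ->
  exists d, 0 < d /\ forall y, 0 < y < d -> Rabs (h y / y - hd 0) < eps.
Proof.
  intros Heps.
  destruct (h_rderive_0 (ball (hd 0) (mkposreal eps Heps)) (locally_ball _ _)) as [d Hd].
  exists d. split; [apply cond_pos|]. intros y Hy.
  assert (Hball : ball 0 d y).
  { change (Rabs (y - 0) < d). rewrite Rminus_0_r, Rabs_right; lra. }
  specialize (Hd y Hball (proj1 Hy)).
  change (Rabs ((h y - h 0) / y - hd 0) < eps) in Hd.
  now rewrite h_at_0, Rminus_0_r in Hd.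
Qed.

Lemma h_le_slope_0 (x : R) : 0 <= x -> h x <= hd 0 * x.
Proof.
  intros Hx. destruct (Req_dec x 0) as [-> | Hne]; [rewrite h_at_0; lra|].
  apply Rnot_lt_le. intros Hlt.
  assert (Hgap : 0 < h x / x - hd 0).
  { apply (Rmult_lt_reg_r x); [lra|]. unfold Rdiv.
    rewrite Rmult_minus_distr_r, Rmult_assoc, Rinv_l; lra. }
  destruct (h_ratio_near_0 _ Hgap) as [d [Hd Hnear]].
  set (y := Rmin x (d / 2)).
  assert (Hy : 0 < y < d) by (unfold y; apply Rmin_case_strong; lra).
  assert (Hyx : y <= x) by apply Rmin_l.
  pose proof (h_ratio_antitone y x ltac:(lra)) as Hratio.
  specialize (Hnear y Hy). apply Rabs_def2 in Hnear as [Hnear _].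
  assert (h x / x <= h y / y).
  { apply (Rmult_le_reg_r (x * y)); [nra|]. unfold Rdiv.
    replace (h x * / x * (x * y)) with (y * h x) by (field; lra).
    replace (h y * / y * (x * y)) with (x * h y) by (field; lra). lra. }
  lra.
Qed.

Lemma h_continuity_pt (x : R) : 0 < x -> continuity_pt h x.
Proof.
  intros Hx. apply continuity_pt_filterlim.
  apply (ex_derive_continuous (K := R_AbsRing) (V := R_NormedModule)).
  exists (hd x). now apply h_derive.
Qed.

Variable zstar : R.

Hypothesis zstar_pos : 0 < zstar.
Hypothesis h_increasing : forall x y, 0 <= x -> x < y -> y < zstar -> h x < h y.
Hypothesis h_decreasing : forall x y, zstar <= x -> x < y -> h y < h x.

Lemma h_nondecreasing_to_peak (x y : R) : 0 <= x -> x <= y -> y <= zstar -> h x <= h y.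
Proof.
  intros Hx Hxy Hy.
  destruct (Req_dec x y) as [<- | Hne]; [lra|].
  destruct (Req_dec y zstar) as [-> | Hne']; [|left; apply h_increasing; lra].
  apply Rnot_lt_le. intros Hlt.
  destruct (continuity_pt_eps h zstar (h x - h zstar) (h_continuity_pt _ zstar_pos))
    as [d [Hd Hnear]]; [lra|].
  set (y' := Rmax ((x + zstar) / 2) (zstar - d / 2)).
  assert (Hy' : x < y' < zstar /\ Rabs (y' - zstar) < d).
  { unfold y'. apply Rmax_case_strong; intros; rewrite Rabs_left; lra. }
  specialize (Hnear y' (proj2 Hy')). apply Rabs_def2 in Hnear.
  pose proof (h_increasing x y' Hx ltac:(lra) ltac:(lra)). lra.
Qed.

Lemma h_le_peak (x : R) : 0 <= x -> h x <= h zstar.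
Proof.
  intros Hx. destruct (Rle_lt_dec x zstar).
  - apply h_nondecreasing_to_peak; lra.
  - left. apply h_decreasing; lra.
Qed.

End ProductionFunction.

(** * The abstract yearly map *)

Definition Qmap (k ta tb : R) (w c h : R -> R) (z : R) : R :=
  z * k + RInt (fun s => w s * h (z * c s)) ta tb.

Section YearlyMap.

Variables (k ta tb cmin cmax : R) (w c h hd : R -> R).

Hypothesis k_range : 0 < k < 1.
Hypothesis ta_le_tb : ta <= tb.
Hypothesis w_continuous : forall s, ta <= s <= tb -> continuous w s.
Hypothesis c_continuous : forall s, ta <= s <= tb -> continuous c s.
Hypothesis w_nonneg : forall s, ta <= s <= tb -> 0 <= w s.
Hypothesis cmin_pos : 0 < cmin.
Hypothesis c_bounds : forall s, ta <= s <= tb -> cmin <= c s <= cmax.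
Hypothesis h_nonneg : forall z, 0 <= z -> 0 <= h z.
Hypothesis h_subhom : forall z lam, 0 <= z -> 0 < lam < 1 -> lam * h z <= h (lam * z).
Hypothesis h_at_0 : h 0 = 0.
Hypothesis h_rderive_0 : filterlim (fun y => (h y - h 0) / y) (at_right 0) (locally (hd 0)).
Hypothesis h_derive : forall z, 0 < z -> is_derive h z (hd z).

Local Notation Q := (Qmap k ta tb w c h).
Local Notation A := (RInt (fun s => w s * c s) ta tb).

Lemma c_pos (s : R) : ta <= s <= tb -> 0 < c s.
Proof. intros Hs. specialize (c_bounds s Hs). lra. Qed.

Lemma wc_integrable : ex_RInt (fun s => w s * c s) ta tb.
Proof.
  apply ex_RInt_continuous_le; [exact ta_le_tb|].
  intros s Hs. apply continuous_mult_R; auto.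
Qed.

Lemma Qmap_integrable (z : R) : 0 <= z -> ex_RInt (fun s => w s * h (z * c s)) ta tb.
Proof.
  intros Hz. apply ex_RInt_continuous_le; [exact ta_le_tb|]. intros s Hs.
  apply continuous_mult_R; [auto|].
  destruct (Req_dec z 0) as [-> | Hne].
  - apply (continuous_ext (fun _ => h 0)); [intros; now rewrite Rmult_0_l|].
    apply continuous_const.
  - apply continuous_comp_R.
    + apply continuous_mult_R; [apply continuous_const | auto].
    + apply continuity_pt_filterlim, (h_continuity_pt h hd h_derive).
      pose proof (c_pos s Hs). nra.
Qed.

Lemma Qmap_nonneg (z : R) : 0 <= z -> 0 <= Q z.
Proof.
  intros Hz. unfold Qmap. apply Rplus_le_le_0_compat; [nra|].
  apply RInt_ge_0; [exact ta_le_tb | now apply Qmap_integrable|].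
  intros s Hs. apply Rmult_le_pos; [apply w_nonneg; lra|].
  apply h_nonneg. pose proof (c_pos s ltac:(lra)). nra.
Qed.

Lemma Qmap_le_linear (z : R) : 0 <= z -> Q z <= (k + hd 0 * A) * z.
Proof.
  intros Hz.
  enough (RInt (fun s => w s * h (z * c s)) ta tb <= hd 0 * z * A) by (unfold Qmap; lra).
  rewrite <- RInt_scal_R by exact wc_integrable.
  apply RInt_le; [exact ta_le_tb | now apply Qmap_integrable | |].
  - apply ex_RInt_scal_R, wc_integrable.
  - intros s Hs. pose proof (c_pos s ltac:(lra)). pose proof (w_nonneg s ltac:(lra)).
    pose proof (h_le_slope_0 h hd h_subhom h_at_0 h_rderive_0 (z * c s) ltac:(nra)). nra.
Qed.

Lemma cmax_pos : 0 < cmax.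
Proof. pose proof (c_bounds ta ltac:(lra)). lra. Qed.

Lemma Qmap_ge_ratio (z : R) : 0 < z -> z * k + h (z * cmax) / (z * cmax) * z * A <= Q z.
Proof.
  intros Hz. pose proof cmax_pos as Hcmax.
  set (r := h (z * cmax) / (z * cmax)).
  enough (r * z * A <= RInt (fun s => w s * h (z * c s)) ta tb) by (unfold Qmap; lra).
  rewrite <- RInt_scal_R by exact wc_integrable.
  apply RInt_le; [exact ta_le_tb | apply ex_RInt_scal_R, wc_integrable | now apply Qmap_integrable; lra |].
  intros s Hs. pose proof (c_bounds s ltac:(lra)). pose proof (w_nonneg s ltac:(lra)).
  pose proof (h_ratio_antitone h h_subhom (z * c s) (z * cmax) ltac:(nra)) as Hratio.
  assert (Hr : r * z * c s <= h (z * c s)).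
  { apply (Rmult_le_reg_r (z * cmax)); [nra|]. unfold r.
    replace (h (z * cmax) / (z * cmax) * z * c s * (z * cmax)) with (z * c s * h (z * cmax))
      by (field; nra).
    nra. }
  nra.
Qed.

Lemma Qmap_gt_id_near_0 :
  1 - k < hd 0 * A -> exists d, 0 < d /\ forall z, 0 < z <= d -> z < Q z.
Proof.
  intros HL. pose proof cmax_pos as Hcmax.
  assert (HA : 0 < A).
  { assert (0 <= A).
    { apply RInt_ge_0; [exact ta_le_tb | exact wc_integrable|]. intros s Hs.
      pose proof (c_pos s ltac:(lra)). pose proof (w_nonneg s ltac:(lra)). nra. }
    destruct (Req_dec A 0) as [HA0 | ]; [rewrite HA0 in HL; lra | lra]. }
  set (eps := (hd 0 * A - (1 - k)) / (2 * A)).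
  destruct (h_ratio_near_0 h hd h_at_0 h_rderive_0 eps) as [d [Hd Hnear]].
  { apply Rdiv_lt_0_compat; lra. }
  exists (d / (2 * cmax)). split; [apply Rdiv_lt_0_compat; lra|].
  intros z Hz.
  assert (Hy : 0 < z * cmax < d).
  { split; [nra|]. apply Rle_lt_trans with (d / (2 * cmax) * cmax); [nra|].
    replace (d / (2 * cmax) * cmax) with (d / 2) by (field; lra). lra. }
  specialize (Hnear _ Hy). apply Rabs_def2 in Hnear as [_ Hnear].
  pose proof (Qmap_ge_ratio z ltac:(lra)) as Hge.
  assert (Heps : (hd 0 - eps) * A = (hd 0 * A + (1 - k)) / 2) by (unfold eps; field; lra).
  set (r := h (z * cmax) / (z * cmax)) in *.
  assert (r * A > (hd 0 - eps) * A) by (apply Rmult_lt_compat_r; lra).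
  nra.
Qed.

Lemma Qmap_continuity_pt (v : R) : 0 < v -> continuity_pt Q v.
Proof.
  intros Hv. pose proof cmax_pos as Hcmax.
  unfold Qmap. apply continuity_pt_plus; [reg|].
  apply (continuity_pt_RInt_param (fun z s => w s * h (z * c s))); [exact ta_le_tb | |].
  { exists (mkposreal v Hv). intros z Hz. apply Qmap_integrable.
    change (Rabs (z - v) < v) in Hz. apply Rabs_def2 in Hz. lra. }
  intros eps Heps.
  destruct (continuity_ab_maj w ta tb ta_le_tb) as [smax [Hsmax Hsmax_in]].
  { intros s Hs. now apply continuity_pt_filterlim, w_continuous. }
  pose proof (w_nonneg smax Hsmax_in) as HW.
  assert (Hh : forall x, v / 2 * cmin <= x <= 3 * v / 2 * cmax -> continuity_pt h x).
  { intros x Hx. apply (h_continuity_pt h hd h_derive). nra. }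
  assert (Heps' : 0 < eps / (w smax + 1)) by (apply Rdiv_lt_0_compat; lra).
  destruct (@Heine_cor2 h _ _ Hh (mkposreal _ Heps')) as [delta Hdelta].
  exists (Rmin (v / 2) (delta / cmax)). split.
  { apply Rmin_pos; [lra | apply Rdiv_lt_0_compat; [apply cond_pos | lra]]. }
  intros z s Hz Hs.
  assert (Hzv : Rabs (z - v) < v / 2) by (eapply Rlt_le_trans; [exact Hz | apply Rmin_l]).
  assert (Hzd : Rabs (z - v) * cmax < delta).
  { apply Rlt_le_trans with (delta / cmax * cmax); [|right; field; lra].
    apply Rmult_lt_compat_r; [lra|]. eapply Rlt_le_trans; [exact Hz | apply Rmin_r]. }
  pose proof (c_bounds s Hs) as Hc. pose proof (w_nonneg s Hs) as Hw.
  pose proof (Hsmax s Hs) as Hws. apply Rabs_def2 in Hzv as Hzv'.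
  assert (Hclose : Rabs (h (z * c s) - h (v * c s)) < eps / (w smax + 1)).
  { apply Hdelta; [nra | nra |].
    rewrite <- Rmult_minus_distr_r, Rabs_mult, (Rabs_right (c s)) by lra.
    pose proof (Rabs_pos (z - v)). nra. }
  rewrite <- Rmult_minus_distr_l, Rabs_mult, (Rabs_right (w s)) by lra.
  apply Rle_trans with (w smax * (eps / (w smax + 1))).
  - pose proof (Rabs_pos (h (z * c s) - h (v * c s))). nra.
  - apply (Rmult_le_reg_r (w smax + 1)); [lra|].
    replace (w smax * (eps / (w smax + 1)) * (w smax + 1)) with (w smax * eps) by (field; lra).
    nra.
Qed.

Lemma Qmap_iter_cvg_0 :
  hd 0 * A / (1 - k) < 1 -> forall u, 0 <= u -> is_lim_seq (fun n => Nat.iter n Q u) 0.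
Proof.
  intros HL. apply iter_cvg_0 with (q := k + hd 0 * A).
  - assert (hd 0 * A < 1 - k).
    { apply (Rmult_lt_reg_r (/ (1 - k))); [apply Rinv_0_lt_compat; lra|].
      rewrite Rinv_r by lra. exact HL. }
    pose proof (Qmap_le_linear 1 ltac:(lra)). pose proof (Qmap_nonneg 1 ltac:(lra)). lra.
  - intros z Hz. split; [now apply Qmap_nonneg | now apply Qmap_le_linear].
Qed.

Variable zstar : R.

Hypothesis zstar_pos : 0 < zstar.
Hypothesis h_increasing : forall x y, 0 <= x -> x < y -> y < zstar -> h x < h y.
Hypothesis h_decreasing : forall x y, zstar <= x -> x < y -> h y < h x.

Lemma Qmap_le_affine (z : R) : 0 <= z -> Q z <= z * k + h zstar * RInt w ta tb.
Proof.
  intros Hz.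
  assert (Hw : ex_RInt w ta tb) by (apply ex_RInt_continuous_le; auto).
  unfold Qmap. apply Rplus_le_compat_l.
  rewrite <- RInt_scal_R by exact Hw.
  apply RInt_le; [exact ta_le_tb | now apply Qmap_integrable | now apply ex_RInt_scal_R |].
  intros s Hs. pose proof (c_pos s ltac:(lra)). pose proof (w_nonneg s ltac:(lra)).
  pose proof (h_le_peak h hd h_derive zstar zstar_pos h_increasing h_decreasing (z * c s)
    ltac:(nra)).
  nra.
Qed.

Lemma Qmap_lt_id_large (d : R) : 0 <= d -> exists z, d < z /\ Q z < z.
Proof.
  intros Hd.
  assert (HI : 0 <= h zstar * RInt w ta tb).
  { apply Rmult_le_pos; [apply h_nonneg; lra|].
    apply RInt_ge_0; [exact ta_le_tb | apply ex_RInt_continuous_le; auto |].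
    intros s Hs. apply w_nonneg. lra. }
  exists (h zstar * RInt w ta tb / (1 - k) + d + 1).
  assert (0 <= h zstar * RInt w ta tb / (1 - k))
    by (apply Rdiv_le_0_compat; lra).
  split; [lra|].
  eapply Rle_lt_trans; [apply Qmap_le_affine; lra|].
  set (I := h zstar * RInt w ta tb) in *.
  assert (I / (1 - k) * k + I = I / (1 - k)) by (field; lra).
  nra.
Qed.

Lemma Qmap_nondecreasing (x y : R) : 0 <= x -> x <= y -> y * cmax <= zstar -> Q x <= Q y.
Proof.
  intros Hx Hxy Hy. unfold Qmap.
  apply Rplus_le_compat; [apply Rmult_le_compat_r; lra|].
  apply RInt_le; [exact ta_le_tb | apply Qmap_integrable; lra | apply Qmap_integrable; lra |].
  intros s Hs. pose proof (c_bounds s ltac:(lra)).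
  apply Rmult_le_compat_l; [apply w_nonneg; lra|].
  apply (h_nondecreasing_to_peak h hd h_derive zstar zstar_pos h_increasing); nra.
Qed.

Theorem Qmap_least_fixed_point :
  1 < hd 0 * A / (1 - k) ->
  exists us, 0 < us /\ Q us = us /\
    (forall v, 0 < v -> Q v = v -> us <= v) /\
    (forall u, 0 < u <= us -> us * cmax <= zstar -> is_lim_seq (fun n => Nat.iter n Q u) us).
Proof.
  intros HL.
  assert (HA : 1 - k < hd 0 * A).
  { apply (Rmult_lt_reg_r (/ (1 - k))); [apply Rinv_0_lt_compat; lra|].
    rewrite Rinv_r by lra. exact HL. }
  destruct (Qmap_gt_id_near_0 HA) as [d [Hd Hsmall]].
  assert (Hbig : forall v, 0 < v -> Q v = v -> d <= v).
  { intros v Hv Hfix. apply Rnot_lt_le. intros Hvd.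
    specialize (Hsmall v ltac:(lra)). lra. }
  destruct (least_positive_fixed_point Q d Hd Qmap_continuity_pt Hbig) as [us [Hus [Hfix Hmin]]].
  { destruct (Qmap_lt_id_large d ltac:(lra)) as [z [Hdz Hz]].
    destruct (fixed_point_between Q d z Hdz) as [v [Hv Hfv]];
      [intros x Hx; apply Qmap_continuity_pt; lra | apply Hsmall; lra | exact Hz |].
    exists v. split; [lra | exact Hfv]. }
  exists us. split; [exact Hus|]. split; [exact Hfix|]. split; [exact Hmin|].
  intros u Hu Hpeak.
  apply iter_cvg_least_fixed_point; [exact Hu | exact Hfix | | | | exact Hmin].
  - intros v Hv. destruct (Req_dec v us) as [-> | Hne]; [lra|].
    left. apply (lt_self_below_least_fixed_point Q d us Hd Hsmall Qmap_continuity_pt Hmin). lra.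
  - intros x y Hx Hxy Hy. apply Qmap_nondecreasing; [lra | lra |].
    apply Rle_trans with (us * cmax); [|exact Hpeak].
    apply Rmult_le_compat_r; [pose proof cmax_pos|]; lra.
  - intros v Hv. apply Qmap_continuity_pt. lra.
Qed.

End YearlyMap.

(** * The model *)

Lemma isC1_continuous (f : R -> R) : isC1 f -> forall x, continuous f x.
Proof.
  intros Hf x. apply (ex_derive_continuous (K := R_AbsRing) (V := R_NormedModule)), Hf.
Qed.

Section SurvivalKernel.

Variable d : R -> R.

Hypothesis d_continuous : forall x, continuous d x.

Lemma ex_RInt_everywhere (a b : R) : ex_RInt d a b.
Proof. apply (ex_RInt_continuous (V := R_CompleteNormedModule)). auto. Qed.

Lemma RInt_Chasles_R (a b c : R) : RInt d a b + RInt d b c = RInt d a c.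
Proof. apply (RInt_Chasles (V := R_CompleteNormedModule)); apply ex_RInt_everywhere. Qed.

Lemma continuous_RInt_from_0 (x : R) : continuous (fun y => RInt d 0 y) x.
Proof.
  apply (ex_derive_continuous (K := R_AbsRing) (V := R_NormedModule)).
  exists (d x). apply (is_derive_RInt d (fun y => RInt d 0 y) 0 x); [|auto].
  exists (mkposreal 1 Rlt_0_1). intros y _.
  apply (RInt_correct (V := R_CompleteNormedModule)), ex_RInt_everywhere.
Qed.

Lemma continuous_kM (f g : R -> R) (x : R) :
  continuous f x -> continuous g x -> continuous (fun y => kM d (f y) (g y)) x.
Proof.
  intros Hf Hg.
  apply (continuous_ext (fun y => exp (RInt d 0 (g y) - RInt d 0 (f y)))).
  { intros y. unfold kM. rewrite <- (RInt_Chasles_R 0 (g y) (f y)).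
    f_equal. ring. }
  apply continuous_exp_comp, continuous_minus_R;
    apply continuous_comp_R; auto; apply continuous_RInt_from_0.
Qed.

Lemma kM_mul (t s r : R) : kM d t s * kM d s r = kM d t r.
Proof. unfold kM. rewrite <- exp_plus, <- (RInt_Chasles_R r s t). f_equal. ring. Qed.

Hypothesis d_pos : forall x, 0 < d x.

Lemma kM_antitone_l (s x y : R) : x <= y -> kM d y s <= kM d x s.
Proof.
  intros Hxy. unfold kM. rewrite <- (RInt_Chasles_R s x y).
  assert (0 <= RInt d x y).
  { apply RInt_ge_0; [exact Hxy | apply ex_RInt_everywhere | intros; left; auto]. }
  destruct (Req_dec (RInt d x y) 0) as [-> | Hne].
  - rewrite Rplus_0_r. lra.
  - left. apply exp_increasing. lra.
Qed.

Lemma kM_lt_1 (t s : R) : s < t -> kM d t s < 1.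
Proof.
  intros Hst. unfold kM. rewrite <- exp_0. apply exp_increasing.
  assert (0 < RInt d s t) by (apply RInt_gt_0; auto).
  lra.
Qed.

End SurvivalKernel.

Lemma sub_tau_nondecreasing (tau : R -> R) (x y : R) :
  (forall t, ex_derive tau t) -> (forall t, Derive tau t < 1) ->
  x <= y -> x - tau x <= y - tau y.
Proof.
  intros Htau Hlt Hxy.
  destruct (MVT_gen (fun s => s - tau s) x y (fun s => 1 - Derive tau s)) as [t [_ Hmvt]].
  - intros t _. apply (is_derive_minus (K := R_AbsRing) (V := R_NormedModule)).
    + apply (is_derive_id (K := R_AbsRing)).
    + apply Derive_correct, Htau.
  - intros t _. apply continuity_pt_filterlim, continuous_minus_R; [apply continuous_id|].
    apply (ex_derive_continuous (K := R_AbsRing) (V := R_NormedModule)), Htau.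
  - cbv beta in Hmvt. specialize (Hlt t). nra.
Qed.

Lemma continuous_gfun (dI tau p : R -> R) (s : R) :
  (forall x, continuous dI x) -> isC1 tau -> (forall x, continuous p x) ->
  continuous (gfun dI tau p) s.
Proof.
  intros HdI Htau Hp.
  assert (Hphi : continuous (fun x => x - tau x) s).
  { apply continuous_minus_R; [apply continuous_id | now apply isC1_continuous]. }
  apply continuous_mult_R; [apply continuous_mult_R|].
  - apply continuous_minus_R; [apply continuous_const | apply Htau].
  - apply (continuous_kM dI HdI (fun x => x) (fun x => x - tau x));
      [apply continuous_id | exact Hphi].
  - apply continuous_comp_R; auto.
Qed.

Lemma gfun_nonneg (dI tau p : R -> R) (s : R) :
  (forall t, Derive tau t < 1) -> (forall t, 0 <= p t) -> 0 <= gfun dI tau p s.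
Proof.
  intros Htau Hp. unfold gfun, eps.
  pose proof (Htau s). pose proof (Hp (s - tau s)).
  pose proof (exp_pos (- RInt dI (s - tau s) s)).
  apply Rmult_le_pos; [apply Rmult_le_pos|]; lra.
Qed.

Lemma Lnum_eq (T ta tb : R) (dM dI tau p : R -> R) (h0' : R) :
  (forall x, continuous dM x) ->
  ex_RInt (fun s => kM dM T s * gfun dI tau p s * kM dM (s - tau s) 0) ta tb ->
  Lnum T ta tb dM dI tau p h0' =
  h0' * RInt (fun s => kM dM T s * gfun dI tau p s * kM dM (s - tau s) 0) ta tb
    / (1 - kM dM T 0).
Proof.
  intros HdM Hex. unfold Lnum.
  assert (Hk : 0 < kM dM T 0) by apply exp_pos.
  rewrite (RInt_ext _ (fun s => h0' / kM dM T 0 *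
             (kM dM T s * gfun dI tau p s * kM dM (s - tau s) 0))).
  - rewrite RInt_scal_R by exact Hex. unfold Rdiv.
    set (I := RInt _ ta tb). set (k := kM dM T 0).
    transitivity (k * / k * (h0' * I * / (1 - k))); [ring|].
    rewrite Rinv_r by (unfold k; lra). ring.
  - intros s _. match goal with |- ?a = ?b => change (@eq R a b) end.
    rewrite <- (kM_mul dM HdM T (s - tau s) 0), <- (kM_mul dM HdM T s (s - tau s)).
    assert (0 < kM dM s (s - tau s)) by apply exp_pos.
    assert (0 < kM dM T s) by apply exp_pos.
    assert (0 < kM dM (s - tau s) 0) by apply exp_pos.
    field. repeat split; lra.
Qed.

Theorem theorem3p1
  (T : R) (dM dI DI tau p h hd : R -> R)
  (alpha beta ta tb zstar : R)
  (HT : 0 < T)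
  (HdM : isC1 dM /\ periodic T dM /\ forall t, 0 < dM t)
  (HdI : isC1 dI /\ periodic T dI /\ forall t, 0 < dI t)
  (HDI : isC1 DI /\ periodic T DI /\ forall t, 0 <= DI t)
  (Htau : isC1 tau /\ periodic T tau /\ forall t, 0 < tau t)
  (Hp : isC1 p /\ periodic T p /\ forall t, 0 <= p t)
  (* h in C^1([0,oo);[0,oo)), hd its derivative on [0,oo) (right derivative at 0) *)
  (Hh_nonneg : forall z, 0 <= z -> 0 <= h z)
  (Hh_der : forall z, 0 < z -> is_derive h z (hd z))
  (Hh_der0 : filterlim (fun y => (h y - h 0) / y) (at_right 0) (locally (hd 0)))
  (Hhd_cont : forall z, 0 <= z ->
      filterlim hd (within (fun y => 0 <= y) (locally z)) (locally (hd z)))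
  (* (a) *)
  (Ha_order : 0 < alpha /\ alpha <= beta /\ beta < ta /\ ta <= tb /\ tb < T)
  (Ha_ta : ta - tau ta = alpha)
  (Ha_tb : tb - tau tb = beta)
  (Ha_p : forall t, (0 <= t <= alpha \/ beta <= t <= T) -> p t = 0)
  (* (b) *)
  (Hb : forall t, Derive tau t < 1)
  (* (c) *)
  (Hc0 : h 0 = 0)
  (Hc_lim : is_lim h p_infty 0)
  (Hc_z : 0 < zstar)
  (Hc_inc : forall x y, 0 <= x -> x < y -> y < zstar -> h x < h y)
  (Hc_dec : forall x y, zstar <= x -> x < y -> h y < h x)
  (* (d) *)
  (Hd : forall z lam, 0 <= z -> 0 < lam < 1 -> lam * h z <= h (lam * z)) :
  let Q := Qbar T ta tb dM dI tau p h in
  let L := Lnum T ta tb dM dI tau p (hd 0) in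
  (1 < L ->
     exists ustar, 0 < ustar /\ Q ustar = ustar /\
       (forall v, 0 < v -> Q v = v -> ustar <= v) /\
       (forall u, 0 < u <= ustar -> ustar * kM dM alpha 0 <= zstar ->
          is_lim_seq (fun n => Nat.iter n Q u) ustar)) /\
  (L < 1 -> forall u, 0 <= u -> is_lim_seq (fun n => Nat.iter n Q u) 0).
Proof.
  intros Q L.
  destruct HdM as [HdM [_ HdM_pos]], HdI as [HdI _], Htau as [Htau [_ Htau_pos]],
    Hp as [Hp [_ Hp_nonneg]], Ha_order as (_ & _ & _ & Hab & _).
  pose proof (isC1_continuous _ HdM) as HdM_cont.
  pose proof (isC1_continuous _ HdI) as HdI_cont.
  pose proof (isC1_continuous _ Hp) as Hp_cont.
  set (w := fun s => kM dM T s * gfun dI tau p s).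
  set (c := fun s => kM dM (s - tau s) 0).
  assert (Hw : forall s, ta <= s <= tb -> continuous w s).
  { intros s _. apply continuous_mult_R; [|apply continuous_gfun; auto].
    apply continuous_kM; [auto | apply continuous_const | apply continuous_id]. }
  assert (Hc : forall s, ta <= s <= tb -> continuous c s).
  { intros s _. apply continuous_kM; [auto | | apply continuous_const].
    apply continuous_minus_R; [apply continuous_id | now apply isC1_continuous]. }
  assert (Hw_nonneg : forall s, ta <= s <= tb -> 0 <= w s).
  { intros s _. apply Rmult_le_pos; [left; apply exp_pos | now apply gfun_nonneg]. }
  assert (Hc_bounds : forall s, ta <= s <= tb -> kM dM tb 0 <= c s <= kM dM alpha 0).
  { intros s Hs. pose proof (sub_tau_nondecreasing tau ta s (fun t => proj1 (Htau t)) Hb (proj1 Hs)).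
    pose proof (Htau_pos s). split; apply kM_antitone_l; auto; lra. }
  assert (Hk : 0 < kM dM T 0 < 1) by (split; [apply exp_pos | apply kM_lt_1; auto]).
  unfold L. rewrite Lnum_eq by auto using wc_integrable.
  split; intros HL.
  - exact (Qmap_least_fixed_point _ _ _ _ _ w c h hd Hk Hab Hw Hc Hw_nonneg (exp_pos _) Hc_bounds
      Hh_nonneg Hd Hc0 Hh_der0 Hh_der zstar Hc_z Hc_inc Hc_dec HL).
  - exact (Qmap_iter_cvg_0 _ _ _ _ _ w c h hd Hk Hab Hw Hc Hw_nonneg (exp_pos _) Hc_bounds
      Hh_nonneg Hd Hc0 Hh_der0 Hh_der HL).
Qed.
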